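(* Let $(A,\leq,\cdot,/)$ be a narhoop and let $N$ be a nonempty normal subnarhoop of $A$. Define $\theta_N$ on $A$ by $x\mathrel{\theta_N} y$ iff $x/y\in N$ and $y/x\in N$. Then $\theta_N$ is a unital congruence on $(A,\cdot,/)$, and $N_{\theta_N}=N$.
   Context: Write $xy$ for $x\cdot y$; $\cdot$ binds more strongly than $/$, and $/$ binds more strongly than $\sqcap$, where $x\sqcap y := (x/y)y$. A right-residuated magma is a structure $(A,\leq,\cdot,/)$ where $(A,\leq)$ is a poset and $xy\leq z\iff x\leq z/y$ for all $x,y,z\in A$. A narhoop is a right-residuated magma such that for all $x,y$: $x\leq y\iff x\sqcap y = x = y\sqcap x$. A congruence $\theta$ on $(A,\cdot,/)$ is unital if $x/x\mathrel{\theta} y/y$ for all $x,y\in A$; for such $\theta$, $N_\theta=\{x\in A\mid x\mathrel{\theta} y/y \text{ for some (equivalently, all) } y\in A\}$. For $x,y\in A$ define maps $A\to A$ by $\phi_{1,x,y}(z)=((zx)y)/(xy)$, $\phi_{2,x,y}(z)=((zx)/y)/(x/y)$, $\phi_{3,x,y}(z)=(x(zy))/(xy)$, $\phi_{4,x,y}(z)=(x/(zy))/(x/y)$, $\phi_{5,x,y}(z)=(xy)/(x(zy))$, $\phi_{6,x,y}(z)=(x/y)/(x/(zy))$; $\mathrm{Inn}(A)$ is the semigroup of maps generated by all of these under composition. A nonempty subset $N\subseteq A$ is a normal subnarhoop if (i) $N$ is closed under $\cdot$ and $/$; (ii) whenever $x\leq y$ and $x\in N$, then $y\in N$; (iii)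 $\phi(N)\subseteq N$ for all $\phi\in\mathrm{Inn}(A)$. *)

From Stdlib Require Import Relations.

Section NarhoopDefs.
Variable A : Type.
Variable le : A -> A -> Prop.
Variable mul : A -> A -> A.
Variable rdiv : A -> A -> A.

Definition meet (x y : A) : A := mul (rdiv x y) y.

Definition is_poset : Prop :=
  (forall x, le x x) /\
  (forall x y, le x y -> le y x -> x = y) /\
  (forall x y z, le x y -> le y z -> le x z).

Definition right_residuated_magma : Prop :=
  is_poset /\ (forall x y z, le (mul x y) z <-> le x (rdiv z y)).

Definition narhoop : Prop :=
  right_residuated_magma /\
  (forall x y, le x y <-> (meet x y = x /\ meet y x = x)).

Definition phi1 (x y : A) (z : A) : A := rdiv (mul (mul z x) y) (mul x y).
Definition phi2 (x y : A) (z : A) : A := rdiv (rdiv (mul z x) y) (rdiv x y).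
Definition phi3 (x y : A) (z : A) : A := rdiv (mul x (mul z y)) (mul x y).
Definition phi4 (x y : A) (z : A) : A := rdiv (rdiv x (mul z y)) (rdiv x y).
Definition phi5 (x y : A) (z : A) : A := rdiv (mul x y) (mul x (mul z y)).
Definition phi6 (x y : A) (z : A) : A := rdiv (rdiv x y) (rdiv x (mul z y)).

Inductive Inn : (A -> A) -> Prop :=
  | Inn1 x y : Inn (phi1 x y)
  | Inn2 x y : Inn (phi2 x y)
  | Inn3 x y : Inn (phi3 x y)
  | Inn4 x y : Inn (phi4 x y)
  | Inn5 x y : Inn (phi5 x y)
  | Inn6 x y : Inn (phi6 x y)
  | Inn_comp f g : Inn f -> Inn g -> Inn (fun z => f (g z)).

Definition normal_subnarhoop (N : A -> Prop) : Prop :=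
  (exists x, N x) /\
  (forall x y, N x -> N y -> N (mul x y)) /\
  (forall x y, N x -> N y -> N (rdiv x y)) /\
  (forall x y, le x y -> N x -> N y) /\
  (forall phi, Inn phi -> forall z, N z -> N (phi z)).

Definition congruence (theta : A -> A -> Prop) : Prop :=
  equivalence A theta /\
  (forall x x' y y', theta x x' -> theta y y' -> theta (mul x y) (mul x' y')) /\
  (forall x x' y y', theta x x' -> theta y y' -> theta (rdiv x y) (rdiv x' y')).

Definition unital (theta : A -> A -> Prop) : Prop :=
  forall x y, theta (rdiv x x) (rdiv y y).

Definition N_of (theta : A -> A -> Prop) (x : A) : Prop :=
  exists y, theta x (rdiv y y).

Definition theta_of (N : A -> Prop) (x y : A) : Prop :=
  N (rdiv x y) /\ N (rdiv y x).

End NarhoopDefs.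

Arguments meet {A}. Arguments is_poset {A}. Arguments right_residuated_magma {A}.
Arguments narhoop {A}. Arguments phi1 {A}. Arguments phi2 {A}. Arguments phi3 {A}.
Arguments phi4 {A}. Arguments phi5 {A}. Arguments phi6 {A}. Arguments Inn {A}.
Arguments normal_subnarhoop {A}. Arguments congruence {A}. Arguments unital {A}.
Arguments N_of {A}. Arguments theta_of {A}.

(* Normality of N enters only through the six inner maps: phi1 and phi2 make
   theta_N compatible in the left operand of [.] and [/], while phi3..phi6,
   applied at c := (y/y') y' (which lies below y and is theta_N-related to y'),
   give compatibility in the right operand.  Upward closure and closure under
   [.] yield the rule "x/y, y in N => x in N", which with phi2 makes theta_N
   transitive; every x/x lies in N, which gives reflexivity, unitality and
   N_{theta_N} = N. *)
From Stdlib Require Import Relations.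

Set Implicit Arguments.

Section Narhoop.

Variable A : Type.
Variable le : A -> A -> Prop.
Variables mul rdiv : A -> A -> A.

Hypothesis narhoop_A : narhoop le mul rdiv.

Local Infix "<=" := le.
Local Infix "*" := mul.
Local Infix "/" := rdiv.

Lemma le_refl x : x <= x.
Proof. destruct narhoop_A as [[[refl _] _] _]; apply refl. Qed.

Lemma le_antisym x y : x <= y -> y <= x -> x = y.
Proof. destruct narhoop_A as [[[_ [antisym _]] _] _]; apply antisym. Qed.

Lemma le_trans x y z : x <= y -> y <= z -> x <= z.
Proof. destruct narhoop_A as [[[_ [_ trans]] _] _]; apply trans. Qed.

Lemma residuation x y z : x * y <= z <-> x <= z / y.
Proof. destruct narhoop_A as [[_ res] _]; apply res. Qed.

Lemma mul_div_le x y : (x / y) * y <= x.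
Proof. apply residuation, le_refl. Qed.

Lemma le_div_mul x y : x <= (x * y) / y.
Proof. apply residuation, le_refl. Qed.

Lemma mul_le_mono_r x x' y : x <= x' -> x * y <= x' * y.
Proof.
  intro le_xx'; apply residuation.
  exact (le_trans le_xx' (le_div_mul x' y)).
Qed.

Lemma div_le_mono_r z z' y : z <= z' -> z / y <= z' / y.
Proof.
  intro le_zz'; apply residuation.
  exact (le_trans (mul_div_le z y) le_zz').
Qed.

Lemma div_mul_le_eq x y : x <= y -> (x / y) * y = x.
Proof. destruct narhoop_A as [_ meet_le]; intro le_xy; apply meet_le, le_xy. Qed.

Lemma div_self_mul x : (x / x) * x = x.
Proof. apply div_mul_le_eq, le_refl. Qed.

Lemma div_mul_div x y : ((x / y) * y) / y = x / y.
Proof. apply le_antisym; [apply div_le_mono_r, mul_div_le | apply le_div_mul]. Qed.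

Section NormalSubnarhoop.

Variable N : A -> Prop.
Hypothesis normal_N : normal_subnarhoop le mul rdiv N.

Lemma normal_inhabited : exists x, N x.
Proof. apply normal_N. Qed.

Lemma normal_mul x y : N x -> N y -> N (x * y).
Proof. apply normal_N. Qed.

Lemma normal_div x y : N x -> N y -> N (x / y).
Proof. apply normal_N. Qed.

Lemma normal_up x y : x <= y -> N x -> N y.
Proof. apply normal_N. Qed.

Lemma normal_Inn phi z : Inn mul rdiv phi -> N z -> N (phi z).
Proof. destruct normal_N as [_ [_ [_ [_ inn]]]]; intros inn_phi Nz; exact (inn phi inn_phi z Nz). Qed.

Lemma normal_mp x y : N (x / y) -> N y -> N x.
Proof.
  intros Nxy Ny; apply (normal_up (mul_div_le x y)).
  exact (normal_mul Nxy Ny).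
Qed.

Lemma normal_div_trans x y z : N (x / y) -> N (y / z) -> N (x / z).
Proof.
  intros Nxy Nyz.
  apply (normal_up (div_le_mono_r z (mul_div_le x y))).
  apply (normal_mp (y := y / z)); [|exact Nyz].
  exact (normal_Inn (Inn2 _ _ _ y z) Nxy).
Qed.

Lemma unit_mul_l x y : N (y / y) -> N ((x * y) / (x * y)).
Proof.
  intro Nyy; generalize (normal_Inn (Inn3 _ _ _ x y) Nyy).
  unfold phi3; rewrite div_self_mul; trivial.
Qed.

Lemma unit_div_r y z : N (y / y) -> N ((y / z) / (y / z)).
Proof.
  intro Nyy; generalize (normal_Inn (Inn2 _ _ _ y z) Nyy).
  unfold phi2; rewrite div_self_mul; trivial.
Qed.

Lemma unit_le x v : x <= v -> N (v / v) -> N (x / x).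
Proof.
  intros le_xv Nvv; generalize (unit_mul_l (x / v) Nvv).
  rewrite (div_mul_le_eq le_xv); trivial.
Qed.

(* Starting from any n in N, n/n in N is pushed to x/x through
   x <= (x n)/n. *)
Lemma normal_div_self x : N (x / x).
Proof.
  destruct normal_inhabited as [n Nn].
  apply (unit_le (le_div_mul x n)), unit_div_r, unit_mul_l.
  exact (normal_div Nn Nn).
Qed.

Lemma normal_div_compat_mul_l x x' y :
  N (x / x') -> N ((x * y) / (x' * y)).
Proof.
  intro Nxx'; apply (normal_up (div_le_mono_r _ (mul_le_mono_r y (mul_div_le x x')))).
  exact (normal_Inn (Inn1 _ _ _ x' y) Nxx').
Qed.

Lemma normal_div_compat_div_l x x' y :
  N (x / x') -> N ((x / y) / (x' / y)).
Proof.
  intro Nxx'; apply (normal_up (div_le_mono_r _ (div_le_mono_r y (mul_div_le x x')))).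
  exact (normal_Inn (Inn2 _ _ _ x' y) Nxx').
Qed.

Lemma normal_meet_div y y' : N (y / y') -> N (y' / y) -> N (((y / y') * y') / y).
Proof.
  intros Nyy' Ny'y; apply (normal_div_trans (y := y')); [|exact Ny'y].
  rewrite div_mul_div; exact Nyy'.
Qed.

Lemma normal_div_compat_mul_r x y y' :
  N (y / y') -> N (y' / y) -> N ((x * y) / (x * y')).
Proof.
  intros Nyy' Ny'y; set (c := (y / y') * y').
  assert (c_y : (c / y) * y = c) by apply div_mul_le_eq, mul_div_le.
  apply (normal_div_trans (y := x * c)).
  - generalize (normal_Inn (Inn5 _ _ _ x y) (normal_meet_div Nyy' Ny'y)).
    unfold phi5; fold c; rewrite c_y; trivial.
  - exact (normal_Inn (Inn3 _ _ _ x y') Nyy').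
Qed.

Lemma normal_div_compat_div_r x y y' :
  N (y / y') -> N (y' / y) -> N ((x / y) / (x / y')).
Proof.
  intros Nyy' Ny'y; set (c := (y / y') * y').
  assert (c_y : (c / y) * y = c) by apply div_mul_le_eq, mul_div_le.
  apply (normal_div_trans (y := x / c)).
  - generalize (normal_Inn (Inn6 _ _ _ x y) (normal_meet_div Nyy' Ny'y)).
    unfold phi6; fold c; rewrite c_y; trivial.
  - exact (normal_Inn (Inn4 _ _ _ x y') Nyy').
Qed.

Local Notation theta := (theta_of rdiv N).

Lemma theta_equivalence : equivalence A theta.
Proof.
  constructor.
  - intro x; split; apply normal_div_self.
  - intros x y z [Nxy Nyx] [Nyz Nzy]; split; eapply normal_div_trans; eassumption.
  - intros x y [Nxy Nyx]; split; assumption.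
Qed.

Lemma theta_mul x x' y y' : theta x x' -> theta y y' -> theta (x * y) (x' * y').
Proof.
  intros [Nxx' Nx'x] [Nyy' Ny'y]; split; apply (normal_div_trans (y := x' * y)).
  - apply normal_div_compat_mul_l, Nxx'.
  - apply normal_div_compat_mul_r; assumption.
  - apply normal_div_compat_mul_r; assumption.
  - apply normal_div_compat_mul_l, Nx'x.
Qed.

Lemma theta_div x x' y y' : theta x x' -> theta y y' -> theta (x / y) (x' / y').
Proof.
  intros [Nxx' Nx'x] [Nyy' Ny'y]; split; apply (normal_div_trans (y := x' / y)).
  - apply normal_div_compat_div_l, Nxx'.
  - apply normal_div_compat_div_r; assumption.
  - apply normal_div_compat_div_r; assumption.
  - apply normal_div_compat_div_l, Nx'x.
Qed.

Lemma theta_congruence : congruence mul rdiv theta.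
Proof. split; [exact theta_equivalence | split; [exact theta_mul | exact theta_div]]. Qed.

Lemma theta_unital : unital rdiv theta.
Proof. intros x y; split; apply normal_div; apply normal_div_self. Qed.

Lemma N_of_theta x : N_of rdiv theta x <-> N x.
Proof.
  split.
  - intros [y [Nx_yy _]]; exact (normal_mp Nx_yy (normal_div_self y)).
  - intro Nx; exists x; split; apply normal_div; auto using normal_div_self.
Qed.

End NormalSubnarhoop.

End Narhoop.

Theorem mainTheorem14 (A : Type) (le : A -> A -> Prop) (mul rdiv : A -> A -> A)
  (N : A -> Prop) :
  narhoop le mul rdiv ->
  normal_subnarhoop le mul rdiv N ->
  congruence mul rdiv (theta_of rdiv N) /\
  unital rdiv (theta_of rdiv N) /\
  (forall x, N_of rdiv (theta_of rdiv N) x <-> N x).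
Proof.
  intros narhoop_A normal_N.
  split; [|split].
  - exact (theta_congruence narhoop_A normal_N).
  - exact (theta_unital narhoop_A normal_N).
  - exact (N_of_theta narhoop_A normal_N).
Qed.
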